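(* Let $x\cdot y$ be a PA-structure on $(\mathfrak{g},\mathfrak{n})$, where $\mathfrak{g}$ is abelian and $\mathfrak{n}$ is $2$-step nilpotent. Then for all $p,q,x\in V$ with $\{x,p\}=\{x,q\}=0$ we have $x\cdot\{p,q\}=0$.
   Context: Let $K$ be a field of characteristic zero and $V$ a finite-dimensional vector space over $K$. Let $\mathfrak{g}=(V,[\,,])$ and $\mathfrak{n}=(V,\{\,,\})$ be two Lie algebra structures on $V$. A post-Lie algebra structure (PA-structure) on the pair $(\mathfrak{g},\mathfrak{n})$ is a $K$-bilinear product $x\cdot y$ on $V$ satisfying, for all $x,y,z\in V$: (i) $x\cdot y-y\cdot x=[x,y]-\{x,y\}$; (ii) $[x,y]\cdot z=x\cdot(y\cdot z)-y\cdot(x\cdot z)$; (iii) $x\cdot\{y,z\}=\{x\cdot y,z\}+\{y,x\cdot z\}$. A Lie algebra is called $2$-step nilpotent here if it is nilpotent of class at most $2$. *)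

From HB Require Import structures.
From mathcomp Require Import all_boot all_order all_algebra.
Set Implicit Arguments. Unset Strict Implicit. Unset Printing Implicit Defensive.
Import GRing.Theory.
Local Open Scope ring_scope.

Definition bilinear_op (K : fieldType) (V : lmodType K) (m : V -> V -> V) : Prop :=
  (forall a x y z, m (a *: x + y) z = a *: m x z + m y z) /\
  (forall a x y z, m x (a *: y + z) = a *: m x y + m x z).

Definition is_lie_bracket (K : fieldType) (V : lmodType K) (br : V -> V -> V) : Prop :=
  [/\ bilinear_op br,
      (forall x, br x x = 0) &
      (forall x y z, br x (br y z) + br y (br z x) + br z (br x y) = 0)].

Definition lie_abelian (K : fieldType) (V : lmodType K) (br : V -> V -> V) : Prop :=
  forall x y, br x y = 0.

Definition lie_two_step_nilpotent (K : fieldType) (V : lmodType K) (br : V -> V -> V) : Prop :=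
  forall x y z, br (br x y) z = 0.

(* Post-Lie algebra structure on (g = (V,lb), n = (V,ln)). *)
Definition is_PA_structure (K : fieldType) (V : lmodType K)
    (lb ln dot : V -> V -> V) : Prop :=
  [/\ bilinear_op dot,
      (forall x y, dot x y - dot y x = lb x y - ln x y),
      (forall x y z, dot (lb x y) z = dot x (dot y z) - dot y (dot x z)) &
      (forall x y z, dot x (ln y z) = ln (dot x y) z + ln y (dot x z))].

(* If the Lie bracket of g vanishes, axiom (ii) says that the left multiplications
   L(a) : b |-> a.b pairwise commute, and axiom (i) reads {a,b} = b.a - a.b.
   Hence x.{p,q} = q.(x.p) - p.(x.q), and {x,p} = {x,q} = 0 turns this into
   q.(p.x) - p.(q.x), which vanishes because L(p) and L(q) commute. *)
From HB Require Import structures.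
From mathcomp Require Import all_boot all_order all_algebra.
Local Open Scope ring_scope.
Import GRing.Theory.

Section BilinearOp.
Local Set Implicit Arguments.
Variables (K : fieldType) (V : lmodType K) (m : V -> V -> V).
Hypothesis m_bilinear : bilinear_op m.

Lemma bilinear_op0l (z : V) : m 0 z = 0.
Proof.
have := (proj1 m_bilinear) 1 0 0 z.
rewrite !scale1r addr0 => /(congr1 (fun t => t - m 0 z)).
by rewrite subrr addrK => /esym.
Qed.

Lemma bilinear_opBr (x y z : V) : m x (y - z) = m x y - m x z.
Proof. by rewrite -scaleN1r addrC (proj2 m_bilinear) scaleN1r addrC. Qed.

End BilinearOp.

Section PostLieAbelian.
Local Set Implicit Arguments.
Variables (K : fieldType) (V : lmodType K) (lb ln dot : V -> V -> V).
Hypothesis PA : is_PA_structure lb ln dot.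
Hypothesis lb_abelian : lie_abelian lb.

Lemma PA_abelian_dotC_left (a b c : V) : dot a (dot b c) = dot b (dot a c).
Proof.
case: PA => dot_bilinear _ dot_lb _.
apply/eqP; rewrite -subr_eq0 -dot_lb lb_abelian.
by rewrite (bilinear_op0l dot_bilinear).
Qed.

Lemma PA_abelian_lnE (a b : V) : ln a b = dot b a - dot a b.
Proof.
case: PA => _ dot_skew _ _.
by rewrite -opprB dot_skew lb_abelian sub0r opprK.
Qed.

Lemma PA_abelian_dot_swap (a b : V) : ln a b = 0 -> dot a b = dot b a.
Proof. by move=> ab0; apply/eqP; rewrite eq_sym -subr_eq0 -PA_abelian_lnE ab0. Qed.

End PostLieAbelian.

Theorem lemma4p10 (K : fieldType) (V : vectType K)
    (lb ln dot : V -> V -> V) :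
  [pchar K] =i pred0 ->
  is_lie_bracket lb -> is_lie_bracket ln ->
  is_PA_structure lb ln dot ->
  lie_abelian lb -> lie_two_step_nilpotent ln ->
  forall p q x : V, ln x p = 0 -> ln x q = 0 -> dot x (ln p q) = 0.
Proof.
move=> _ _ _ PA lb_abelian _ p q x xp0 xq0.
have [dot_bilinear _ _ _] := PA.
have dotC_left := PA_abelian_dotC_left PA lb_abelian.
have dot_swap := PA_abelian_dot_swap PA lb_abelian.
rewrite (PA_abelian_lnE PA lb_abelian) (bilinear_opBr dot_bilinear).
rewrite dotC_left [dot x (dot p q)]dotC_left.
rewrite (dot_swap x p xp0) (dot_swap x q xq0) dotC_left.
exact: subrr.
Qed.
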